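(* Let $\mathcal{A}\subseteq\mathbb{R}^{m}$ be a nonempty set, let $C:\mathcal{A}\to\mathbb{R}$ be a base objective, and define $E:\mathcal{A}\to[0,\infty)$ by $E(a)=\|\hat{\theta}^k_{t+1}(a)-\theta^k\|^2$ where $\hat{\theta}^k_{t+1}(a)=h^{-k}_\ell(\hat{\theta}^k_t,\hat{\theta}^{-k}_t,a,s_t)$ for an arbitrary map $h^{-k}_\ell$ and fixed $\hat{\theta}^k_t,\hat{\theta}^{-k}_t,s_t,\theta^k$. For $\eta\ge0$ let $\Phi^{\eta}=C+\eta E$. Assume the relevant minima are attained (i.e., $\arg\min_{\mathcal{A}}C$, $\arg\min_{\mathcal{A}}E$ and $\arg\min_{\mathcal{A}}\Phi^\eta$ for the $\eta$ considered are nonempty, and $E$ attains its minimum on $\arg\min_{\mathcal{A}}C$). Let $a^{0}\in\arg\min_{\mathcal{A}}C$ be any minimizer, and for $\eta\ge0$ let $a^{\eta}\in\arg\min_{\mathcal{A}}\Phi^{\eta}$ be any minimizer. Then: (i) for every $\eta>0$, $E(a^{\eta})\le E(a^{0})$; (ii) if $\arg\min_{\mathcal{A}}C\cap\arg\min_{\mathcal{A}}E=\varnothing$, then there exists $\eta^\star>0$ such that for all $\eta>\eta^\star$, $E(a^{\eta})<E(a^{0})$. *)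

From HB Require Import structures.
From mathcomp Require Import all_boot all_order all_algebra.
From mathcomp Require Import reals.
Set Implicit Arguments. Unset Strict Implicit. Unset Printing Implicit Defensive.
Import Order.TTheory GRing.Theory Num.Theory.
Local Open Scope ring_scope.

Definition sqnorm {R : numDomainType} {n : nat} (v : 'rV[R]_n) : R :=
  \sum_(i < n) (v ord0 i) ^+ 2.

Definition is_argmin {T : Type} {R : numDomainType} (A : T -> Prop) (f : T -> R)
  (a : T) : Prop :=
  A a /\ (forall b, A b -> f a <= f b).

From HB Require Import structures.
From mathcomp Require Import all_boot all_order all_algebra.
From mathcomp Require Import reals.
From mathcomp Require Import lra.
Set Implicit Arguments. Unset Strict Implicit.
Import Order.TTheory GRing.Theory Num.Theory.
Local Open Scope ring_scope.

(* Since a0 minimizes C, C a0 <= C a^eta; comparing Phi^eta at a^eta with its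
   value at a competitor b gives eta E a^eta <= eta E a0 + (Phi^eta b - Phi^eta a0).
   Taking b = a0 yields (i).  If some b has E b < E a0 (an E-minimizer does when
   the two argmin sets are disjoint), then Phi^eta b < Phi^eta a0 once eta exceeds
   (|C b - C a0| + 1) / (E a0 - E b) (the + 1 keeps the threshold positive), and the inequality becomes strict. *)

Lemma penalty_eventually_lt (R : realFieldType) (c1 c0 e1 e0 : R) :
  e1 < e0 -> exists eta_star : R, 0 < eta_star /\
    forall eta, eta_star < eta -> c1 + eta * e1 < c0 + eta * e0.
Proof.
move=> lt_e; have gap_gt0 : 0 < e0 - e1 by rewrite subr_gt0.
exists ((`|c1 - c0| + 1) / (e0 - e1)); split.
  by rewrite divr_gt0 // ltr_pwDr.
move=> eta; rewrite ltr_pdivrMr // mulrBr => lt_eta.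
have := ler_norm (c1 - c0); lra.
Qed.

Section PenalizedArgmin.

Variables (T : Type) (R : realFieldType) (A : T -> Prop) (C E : T -> R).

Definition penalized (eta : R) (a : T) : R := C a + eta * E a.

Variables (eta : R) (a0 aeta : T).
Hypotheses (eta_gt0 : 0 < eta) (a0_min : is_argmin A C a0)
  (aeta_min : is_argmin A (penalized eta) aeta).

Lemma penalized_argmin_le : E aeta <= E a0.
Proof.
case: a0_min aeta_min => A_a0 C_a0 [A_aeta Phi_aeta].
rewrite -(ler_pM2l eta_gt0).
have := C_a0 _ A_aeta; have := Phi_aeta _ A_a0; rewrite /penalized; lra.
Qed.

Lemma penalized_argmin_lt (b : T) :
  A b -> penalized eta b < penalized eta a0 -> E aeta < E a0.
Proof.
case: a0_min aeta_min => _ C_a0 [A_aeta Phi_aeta] A_b Phi_b_lt.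
rewrite -(ltr_pM2l eta_gt0); move: Phi_b_lt.
have := C_a0 _ A_aeta; have := Phi_aeta _ A_b; rewrite /penalized; lra.
Qed.

End PenalizedArgmin.

Lemma disjoint_argmin_lt (T : Type) (R : realFieldType) (A : T -> Prop)
    (C E : T -> R) (a0 b : T) :
  is_argmin A C a0 -> is_argmin A E b ->
  ~ (exists a, is_argmin A C a /\ is_argmin A E a) -> E b < E a0.
Proof.
move=> a0_min [A_b E_b] disjoint; rewrite lt_neqAle E_b ?andbT; last by case: a0_min.
apply/eqP => Eb_a0; apply: disjoint; exists a0; split=> //.
by split=> [|c A_c]; [case: a0_min | rewrite -Eb_a0; apply: E_b].
Qed.

Theorem corollary3p3 (R : realType) (m p q : nat) (S : Type)
  (A : 'rV[R]_m -> Prop) (C : 'rV[R]_m -> R)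
  (h : 'rV[R]_p -> 'rV[R]_q -> 'rV[R]_m -> S -> 'rV[R]_p)
  (thk_t : 'rV[R]_p) (thmk_t : 'rV[R]_q) (s_t : S) (thk : 'rV[R]_p)
  (hA : exists a, A a) :
  let E := fun a => sqnorm (h thk_t thmk_t a s_t - thk) in
  let Phi := fun (eta : R) a => C a + eta * E a in
  (exists a, is_argmin A C a) ->
  (exists a, is_argmin A E a) ->
  (forall eta : R, 0 <= eta -> exists a, is_argmin A (Phi eta) a) ->
  (exists a, is_argmin (fun b => is_argmin A C b) E a) ->
  forall a0, is_argmin A C a0 ->
  (forall eta : R, 0 < eta ->
     forall aeta, is_argmin A (Phi eta) aeta -> E aeta <= E a0) /\
  ((~ exists a, is_argmin A C a /\ is_argmin A E a) ->
     exists eta_star : R, 0 < eta_star /\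
       forall eta : R, eta_star < eta ->
         forall aeta, is_argmin A (Phi eta) aeta -> E aeta < E a0).
Proof.
move=> E Phi _ [b b_min] _ _ a0 a0_min; split.
  by move=> eta eta_gt0 aeta; apply: penalized_argmin_le.
move=> disjoint; have Eb_lt := disjoint_argmin_lt a0_min b_min disjoint.
have [eta_star [eta_star_gt0 Phi_lt]] := penalty_eventually_lt (C b) (C a0) Eb_lt.
exists eta_star; split=> // eta lt_eta aeta aeta_min.
have eta_gt0 : 0 < eta by apply: lt_trans lt_eta.
have [A_b _] := b_min.
exact: (penalized_argmin_lt eta_gt0 a0_min aeta_min A_b (Phi_lt _ lt_eta)).
Qed.
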